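(* Let $\mathcal{G}$ be a $k$-uniform hypergraph with $n$ vertices. Then \[ {\rm bw}(\mathcal{G}) \geq\frac{n+(-1)^n}{k(n+1)}\sum_{j = 1}^n \alpha _j(\mathcal{G}). \]
   Context: A $k$-uniform hypergraph $\mathcal{G}$ has vertex set $V(\mathcal{G})=[n]$ and edge set $E(\mathcal{G})$ of $k$-element subsets of $V(\mathcal{G})$. For $\mathbf{x}\in\mathbb{R}^n$, $\mathcal{L}_\mathcal{G}\mathbf{x}^k=\sum_{\{i_1,\ldots,i_k\}\in E(\mathcal{G})}\left(x_{i_1}^k+\cdots+x_{i_k}^k-k\,x_{i_1}\cdots x_{i_k}\right)$. The inverse Perron value of vertex $j$ is $\alpha_j(\mathcal{G})=\min\{\mathcal{L}_\mathcal{G}\mathbf{x}^k : \mathbf{x}\in\mathbb{R}^n_+,\ \sum_{i=1}^n x_i^k=1,\ x_j=0\}$ ($\mathbb{R}^n_+$ = nonnegative vectors). For $S\subseteq V(\mathcal{G})$ with complement $\overline{S}=V(\mathcal{G})\setminus S$, $E(S,\overline{S})$ is the set of edges containing vertices of both $S$ and $\overline{S}$. The bipartition width is ${\rm bw}(\mathcal{G})=\min\{|E(S,\overline{S})| : S\subseteq V(\mathcal{G}),\ |S|=\lfloor n/2\rfloor\}$. *)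

From HB Require Import structures.
From mathcomp Require Import all_boot all_order all_algebra.
From mathcomp Require Import classical_sets reals.
Set Implicit Arguments. Unset Strict Implicit. Unset Printing Implicit Defensive.
Import Order.TTheory GRing.Theory Num.Theory.
Local Open Scope ring_scope.
Local Open Scope classical_set_scope.

Definition uniform (n k : nat) (E : {set {set 'I_n}}) : Prop :=
  forall e, e \in E -> #|e| = k.

Definition lapk (R : realType) (n k : nat) (E : {set {set 'I_n}})
    (x : 'I_n -> R) : R :=
  \sum_(e in E) (\sum_(i in e) x i ^+ k - k%:R * \prod_(i in e) x i).

(* inverse Perron value alpha_j: min (realized as inf) of L x^k over
   nonnegative x with sum x_i^k = 1 and x_j = 0 *)
Definition alpha (R : realType) (n k : nat) (E : {set {set 'I_n}}) (j : 'I_n) : R :=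
  inf [set lapk k E x | x in
        [set x : 'I_n -> R | (forall i, 0 <= x i) /\
                              \sum_(i < n) x i ^+ k = 1 /\ x j = 0]].

Definition cut (n : nat) (E : {set {set 'I_n}}) (S : {set 'I_n}) : {set {set 'I_n}} :=
  [set e in E | (e :&: S != finset.set0) && (e :&: ~: S != finset.set0)].

(* bipartition width: min over |S| = floor(n/2) of |E(S,S-bar)|.
   The default #|E| is an upper bound of every cut, so this is the true min. *)
Definition bw (n : nat) (E : {set {set 'I_n}}) : nat :=
  \big[minn/#|E|]_(S : {set 'I_n} | #|S| == n./2) #|cut E S|.

From HB Require Import structures.
From mathcomp Require Import all_boot all_order all_algebra.
From mathcomp Require Import classical_sets reals.
From mathcomp Require Import ring lra zify.
Set Implicit Arguments. Unset Strict Implicit. Unset Printing Implicit Defensive.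
Import Order.TTheory GRing.Theory Num.Theory.
Local Open Scope ring_scope.

(* Fix a bipartition (S, ~: S) with |S| = a and |~: S| = b.  For j outside S,
   the vector that is constant on S and vanishes elsewhere, normalised so that
   sum x_i^k = 1, is admissible for alpha_j; edges inside S or inside ~: S
   contribute nothing to L x^k, and a cut edge e contributes |e /\ S| / a.
   Hence alpha_j <= A / a with A = sum_{e in cut} |e /\ S|, and symmetrically
   alpha_j <= B / b for j in S.  Summing gives sum_j alpha_j <= b A / a + a B / b,
   while A + B = k |cut| by uniformity.  For the balanced bipartition
   (b = a or b = a + 1) the factor (n + (-1)^n) / (n + 1) exactly absorbs the
   imbalance, giving (A + B) / k = |cut| as an upper bound. *)

Lemma exists_nonneg_root (R : rcfType) (k : nat) (a : R) : (0 < k)%N -> 0 <= a ->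
  exists2 c : R, 0 <= c & c ^+ k = a.
Proof.
move=> k_gt0 a_ge0.
have a1_ge1 : 1 <= 1 + a by rewrite lerDl.
have [|c /andP[c_ge0 _]] := @poly_ivt R ('X^k - a%:P) 0 (1 + a) (le_trans ler01 a1_ge1).
  rewrite !hornerE expr0n eqn0Ngt k_gt0 sub0r oppr_le0 a_ge0 subr_ge0 /=.
  by rewrite (le_trans _ (ler_eXnr _ _)) // lerDr.
by rewrite rootE !hornerE subr_eq0 => /eqP; exists c.
Qed.

Section IndicatorVectors.
Variables (R : realType) (n k : nat).
Hypothesis k_gt0 : (0 < k)%N.

Definition indic (T : {set 'I_n}) (c : R) (i : 'I_n) : R := if i \in T then c else 0.

Lemma sum_indic_expr (T : {set 'I_n}) (c : R) (e : {set 'I_n}) :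
  \sum_(i in e) indic T c i ^+ k = c ^+ k * #|e :&: T|%:R.
Proof.
rewrite (bigID (mem T)) /= [X in _ + X]big1 ?addr0; last first.
  by move=> i /andP[_ /negbTE]; rewrite /indic => ->; rewrite expr0n eqn0Ngt k_gt0.
rewrite (eq_bigr (fun=> c ^+ k)); last by move=> i /andP[_]; rewrite /indic => ->.
by rewrite (eq_bigl (mem (e :&: T))) ?sumr_const ?mulr_natr // => i; rewrite !inE.
Qed.

Definition cut_weight (E : {set {set 'I_n}}) (T : {set 'I_n}) : R :=
  \sum_(e in cut E T) #|e :&: T|%:R.

Lemma lapk_indic (E : {set {set 'I_n}}) (T : {set 'I_n}) (c : R) :
  uniform k E -> lapk k E (indic T c) = c ^+ k * cut_weight E T.
Proof.
move=> uE; rewrite /lapk /cut_weight big_distrr /=.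
rewrite [RHS]big_mkcond [LHS]big_mkcond /=; apply: eq_bigr => e _.
rewrite inE; case eE: (e \in E) => //=; rewrite sum_indic_expr.
have [eT|eNT] := boolP (e \subset T).
  rewrite (eq_bigr (fun=> c)) => [|i ie]; last by rewrite /indic (fintype.subsetP eT).
  rewrite prodr_const -finset.setDE finset.setD_eq0 eT andbF.
  by rewrite (finset.setIidPl eT) uE // mulrC subrr.
have [i ie iT] := fintype.subsetPn eNT.
rewrite (bigD1 i) //=.
have -> : indic T c i = 0 by rewrite /indic (negbTE iT).
rewrite mul0r mulr0 subr0 -finset.setDE finset.setD_eq0 (negbTE eNT) andbT.
by case: eqP => [->|_]; rewrite ?cards0 ?mulr0.
Qed.

End IndicatorVectors.

Arguments indic {R n}.
Arguments cut_weight {R n}.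

Lemma cutC n (E : {set {set 'I_n}}) (S : {set 'I_n}) : cut E (~: S) = cut E S.
Proof. by apply/setP => e; rewrite !inE finset.setCK [X in _ && X]andbC. Qed.

(* Admissible vectors satisfy 0 <= x_i <= 1, so each edge contributes at least -k. *)
Lemma has_lbound_lapk (R : realType) n k (E : {set {set 'I_n}}) (j : 'I_n) :
  has_lbound [set lapk k E x | x in [set x : 'I_n -> R | (forall i, 0 <= x i) /\
                              \sum_(i < n) x i ^+ k = 1 /\ x j = 0]].
Proof.
exists (- (k * #|E|)%:R) => _ [x [x_ge0 [x_norm _]] <-].
have -> : - (k * #|E|)%:R = \sum_(e in E) - (k%:R : R).
  by rewrite sumr_const mulNrn natrM mulr_natr.
apply: ler_sum => e _.
rewrite -[X in X <= _]add0r lerD //.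
  by apply: sumr_ge0 => i _; exact: exprn_ge0.
rewrite lerN2; have [->|k_gt0] := posnP k; first by rewrite mul0r.
rewrite ger_pMr ?ltr0n //; apply: prodr_ile1 => i _.
rewrite x_ge0 -(expr_le1 k_gt0 (x_ge0 i)) -x_norm (bigD1 i) //= lerDl.
by apply: sumr_ge0 => l _; exact: exprn_ge0.
Qed.

Lemma alpha_le_cut_weight (R : realType) n k (E : {set {set 'I_n}}) (T : {set 'I_n})
    (j : 'I_n) : (0 < k)%N -> uniform k E -> j \notin T -> (0 < #|T|)%N ->
  alpha R k E j <= cut_weight E T / #|T|%:R.
Proof.
move=> k_gt0 uE jT T_gt0.
have [c c_ge0 ck] : exists2 c : R, 0 <= c & c ^+ k = #|T|%:R^-1.
  by apply: exists_nonneg_root; rewrite ?invr_ge0.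
rewrite mulrC -ck -lapk_indic //; apply: ge_inf; first exact: has_lbound_lapk.
exists (indic T c) => //; split; [|split].
- by move=> i; rewrite /indic; case: ifP.
- rewrite (eq_bigl (mem (finset.setT : {set 'I_n}))) => [|i]; last by rewrite !inE.
  rewrite sum_indic_expr // finset.setTI ck mulVf //.
  by rewrite pnatr_eq0 -lt0n.
- by rewrite /indic (negbTE jT).
Qed.

Lemma cut_weightD (R : realType) n k (E : {set {set 'I_n}}) (S : {set 'I_n}) :
  uniform k E -> cut_weight E S + cut_weight E (~: S) = k%:R * #|cut E S|%:R :> R.
Proof.
move=> uE; rewrite /cut_weight cutC -big_split /= mulr_natr -sumr_const.
apply: eq_bigr => e; rewrite inE => /andP[eE _].
by rewrite -natrD -finset.setDE cardsID uE.
Qed.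

Lemma sum_alpha_le (R : realType) n k (E : {set {set 'I_n}}) (S : {set 'I_n}) :
  (0 < k)%N -> uniform k E -> (0 < #|S|)%N -> (0 < #|~: S|)%N ->
  \sum_(j < n) alpha R k E j <=
    #|S|%:R * (cut_weight E (~: S) / #|~: S|%:R) + #|~: S|%:R * (cut_weight E S / #|S|%:R).
Proof.
move=> k_gt0 uE S_gt0 CS_gt0.
rewrite (bigID (mem S)) /= [X in _ + X](eq_bigl (mem (~: S))) => [|j]; last by rewrite !inE.
apply: lerD; rewrite mulr_natl -sumr_const; apply: ler_sum => j jS.
  by apply: alpha_le_cut_weight; rewrite ?inE ?negbK.
by apply: alpha_le_cut_weight; rewrite // -finset.in_setC.
Qed.

(* With a = |S|, o = n mod 2 and |~: S| = a + o: for n odd the prefactor is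
   a / (k (a + 1)), which turns the bound into (A + B (a / (a + 1))^2) / k. *)
Lemma balanced_ratio_le (R : realFieldType) (o : bool) (k a A B : R) :
  0 < k -> 0 < a -> 0 <= A -> 0 <= B ->
  (2 * a + o%:R + (-1) ^+ o) / (k * (2 * a + o%:R + 1)) *
    (a * (B / (a + o%:R)) + (a + o%:R) * (A / a)) <= (A + B) / k.
Proof.
move=> k_gt0 a_gt0 A_ge0 B_ge0.
have k_neq0 : k != 0 by rewrite gt_eqF.
have a_neq0 : a != 0 by rewrite gt_eqF.
case: o => /=; last first.
  rewrite le_eqVlt; apply/orP; left; apply/eqP; field.
  by rewrite k_neq0 a_neq0 gt_eqF //=; lra.
have a1_neq0 : a + 1 != 0 by rewrite gt_eqF //; lra.
have a2_neq0 : 2 * a + 1 + 1 != 0 by rewrite gt_eqF //; lra.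
set q := a / (a + 1).
have q_ge0 : 0 <= q by rewrite divr_ge0 //; lra.
have q_le1 : q <= 1 by rewrite ler_pdivrMr ?mul1r; lra.
have -> : (2 * a + 1 + (-1) ^+ 1) / (k * (2 * a + 1 + 1)) *
    (a * (B / (a + 1)) + (a + 1) * (A / a)) = (A + B * q ^+ 2) / k.
  by rewrite /q; field; rewrite k_neq0 a_neq0 a1_neq0 a2_neq0.
by rewrite ler_pM2r ?invr_gt0 // lerD2l -[leRHS]mulr1 ler_wpM2l // exprn_ile1.
Qed.

Lemma cut_ge_sum_alpha (R : realType) n k (E : {set {set 'I_n}}) (S : {set 'I_n}) :
  (0 < k)%N -> uniform k E -> (1 < n)%N -> #|S| = n./2 ->
  (n%:R + (-1) ^+ n) / (k%:R * (n%:R + 1)) * \sum_(j < n) alpha R k E j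
    <= #|cut E S|%:R.
Proof.
move=> k_gt0 uE n_gt1 S_half.
have CS_card : #|~: S| = (#|S| + odd n)%N.
  by have := cardsC S; rewrite card_ord S_half; have := odd_double_half n; lia.
have S_gt0 : (0 < #|S|)%N by rewrite S_half; lia.
have CS_gt0 : (0 < #|~: S|)%N by rewrite CS_card; lia.
have n_eq : n%:R = 2 * #|S|%:R + (odd n)%:R :> R.
  by rewrite -natrM -natrD S_half mul2n addnC odd_double_half.
have cut_eq : #|cut E S|%:R = (cut_weight E S + cut_weight E (~: S)) / k%:R :> R.
  by rewrite (cut_weightD R S uE) mulrAC divff ?mul1r // pnatr_eq0 -lt0n.
apply: le_trans (ler_wpM2l _ (sum_alpha_le R k_gt0 uE S_gt0 CS_gt0)) _.
  have n_ge1 : 1 <= n%:R :> R by rewrite ler1n ltnW.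
  have sign_ge : -1 <= (-1) ^+ n :> R.
    by rewrite -signr_odd; case: (odd n); rewrite /= ?expr0 ?expr1 //; lra.
  by rewrite divr_ge0 ?mulr_ge0 ?ler0n //; lra.
rewrite cut_eq -signr_odd n_eq CS_card natrD.
by apply: balanced_ratio_le; rewrite ?ltr0n //; apply: sumr_ge0.
Qed.

Lemma bw_ge (R : numDomainType) n (E : {set {set 'I_n}}) (x : R) :
  (forall S : {set 'I_n}, #|S| = n./2 -> x <= #|cut E S|%:R) -> x <= (bw E)%:R.
Proof.
move=> x_le_cut.
have [s [s_uniq s_size _]] : exists s : seq 'I_n, [/\ uniq s, size s = n./2 & {subset s <= 'I_n}].
  by apply/card_geqP; rewrite card_ord leq_half_double ltnW // ltnS -addnn leq_addr.
have S_half : #|[set i in s]| = n./2 by rewrite cardsE (card_uniqP s_uniq) s_size.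
apply: (big_ind (fun m : nat => x <= m%:R)).
- apply: le_trans (x_le_cut _ S_half) _; rewrite ler_nat; apply: subset_leq_card.
  by apply/fintype.subsetP => e; rewrite inE => /andP[].
- by move=> a b xa xb; rewrite /minn; case: ifP.
- by move=> S /eqP; exact: x_le_cut.
Qed.

Theorem theorem3p2 (R : realType) (n k : nat) (E : {set {set 'I_n}}) :
  uniform k E ->
  (bw E)%:R >= (n%:R + (-1) ^+ n) / (k%:R * (n%:R + 1)) * \sum_(j < n) alpha R k E j.
Proof.
move=> uE; have [->|k_gt0] := posnP k.
  by rewrite mul0r invr0 mulr0 mul0r ler0n.
have [n_le1|n_gt1] := leqP n 1.
  case: n E uE n_le1 => [|[|//]] E _ _.
    by rewrite big_ord0 mulr0 ler0n.
  by rewrite expr1 addrN !mul0r ler0n.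
by apply: bw_ge => S S_half; exact: cut_ge_sum_alpha.
Qed.
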